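(* For $n\in\mathbb{N}$ let $\sigma^{(n)}$ be the distribution on $[n]$ with $\sigma^{(n)}_{\le i}=1-(1-\frac in)^2$, and consider the exponential-jump process with choice distribution $\sigma^{(n)}$ in its stationary regime, i.e. with gap vector $(d_1,\dots,d_{n-1})$ distributed according to $\bigotimes_{i=1}^{n-1}\mathrm{Exp}(n\sigma^{(n)}_{\le i}-i)$. Define $g_n(x)=\mathbb{E}\big[t_{\lceil xn\rceil}-t_{\lceil n/2\rceil}\big]$ for $x\in(0,1)$. Then for every $x\in(0,1)$, \[\lim_{n\to\infty}g_n(x)=\log\Big(\frac{x}{1-x}\Big).\]
   Context: The exponential-jump process with choice distribution $\sigma$ on $[n]$: the state consists of $n$ tokens at real positions $t_1<\dots<t_n$; in each step, independently sample $i^*\sim\sigma$ and $X\sim\mathrm{Exp}(1)$, move the $i^*$-th token from the left a distance $X$ to the right, and re-sort. The gaps are $d_i=t_{i+1}-t_i$, so $t_j-t_k=\sum_{i=k}^{j-1}d_i$ for $k\le j$ (and the negative of the corresponding sum for $k>j$). $\mathrm{Exp}(\lambda)$ is the exponential distribution with rate $\lambda$ (mean $1/\lambda$); $\bigotimes$ denotes a product of independent distributions; the product distribution above is the stationary distribution of the gap vector. $\log$ is the natural logarithm. *)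

From HB Require Import structures.
From mathcomp Require Import all_boot all_order all_algebra.
From mathcomp Require Import all_classical all_reals all_analysis.
Set Implicit Arguments. Unset Strict Implicit. Unset Printing Implicit Defensive.
Import Order.TTheory GRing.Theory Num.Theory.
Import numFieldNormedType.Exports.
Local Open Scope classical_set_scope.
Local Open Scope ring_scope.

Definition sigma_le {R : realType} (n i : nat) : R :=
  1 - (1 - i%:R / n%:R) ^+ 2.

Definition gap_rate {R : realType} (n i : nat) : R :=
  n%:R * sigma_le n i - i%:R.

(* t_j - t_k expressed through the gaps d_i = t_{i+1} - t_i (1-indexed) *)
Definition tdiff {T : Type} {R : realType} (d : nat -> T -> R) (k j : nat)
  : T -> R :=
  fun w => if (k <= j)%N then \sum_(k <= i < j) d i w
           else - \sum_(j <= i < k) d i w.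

Definition mutually_independent {d} {T : measurableType d} {R : realType}
  (P : probability T R) (I : set nat) (X : nat -> {RV P >-> R}) : Prop :=
  forall (J : seq nat), uniq J -> (forall j, j \in J -> I j) ->
  forall B : nat -> set R, (forall j, measurable (B j)) ->
  P (\big[setI/setT]_(j <- J) (X j @^-1` B j)) =
  (\prod_(j <- J) P (X j @^-1` B j))%E.
Arguments mutually_independent {d T R} P I X.

From HB Require Import structures.
From mathcomp Require Import all_boot all_order all_algebra.
From mathcomp Require Import all_classical all_reals all_analysis.
From mathcomp Require Import ring lra zify.
Import Order.TTheory GRing.Theory Num.Theory.
Import numFieldNormedType.Exports.
Local Open Scope classical_set_scope.
Local Open Scope ring_scope.

(* The i-th gap is exponential with rate i(n-i)/n, hence has mean 1/i + 1/(n-i),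
   and by linearity E[t_j - t_k] is the signed sum of these means between
   k = ceil(n/2) and j = ceil(xn). Comparing 1/m with ln(m+1) - ln m, the sum
   telescopes to L(j) - L(k), with L(i) = ln i - ln(n-i+1), up to an error
   O(1/k + 1/j + 1/(n-k+1) + 1/(n-j+1)). Since k/n -> 1/2 and j/n -> x, the
   error vanishes and L(j) - L(k) -> ln(x/(1-x)) - ln((1/2)/(1/2)). *)

Definition signed_sum {V : zmodType} (f : nat -> V) (a b : nat) : V :=
  if (a <= b)%N then \sum_(a <= i < b) f i else - \sum_(b <= i < a) f i.

Section signed_sum.
Variable R : realDomainType.

Lemma sum_telescope_bounds (f L e : nat -> R) (a b : nat) : (a <= b)%N ->
  (forall i, (a <= i < b)%N -> 0 <= f i - (L i.+1 - L i) <= e i - e i.+1) ->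
  0 <= \sum_(a <= i < b) f i - (L b - L a) <= e a - e b.
Proof.
move=> ab hf.
have eE : e a - e b = \sum_(a <= i < b) (e i - e i.+1).
  by rewrite -opprB -(telescope_sumr _ ab) -sumrN; apply: eq_bigr => i _; rewrite opprB.
rewrite eE -(telescope_sumr _ ab) -sumrB; apply/andP; split.
  by rewrite big_seq sumr_ge0// => i; rewrite mem_index_iota => /hf /andP[].
by apply: ler_sum_nat => i /hf /andP[].
Qed.

Lemma signed_sum_telescope_bound (f L e : nat -> R) (a b : nat) :
  (forall i, (minn a b <= i < maxn a b)%N ->
     0 <= f i - (L i.+1 - L i) <= e i - e i.+1) ->
  `|signed_sum f a b - (L b - L a)| <= `|e a - e b|.
Proof.
rewrite /signed_sum; case: leqP => [ab|ba] hf.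
  have /andP[lo hi] := sum_telescope_bounds _ _ _ _ _ ab hf.
  by rewrite ger0_norm// (le_trans hi)// ler_norm.
have /andP[lo hi] := sum_telescope_bounds _ _ _ _ _ (ltnW ba) hf.
rewrite [`|e a - e b|]distrC (le_trans _ (ler_norm _))// ler_norml.
by apply/andP; split; lra.
Qed.

End signed_sum.

Definition mean_gap {R : realType} (n i : nat) : R := i%:R^-1 + (n%:R - i%:R)^-1.

Definition logit_approx {R : realType} (n i : nat) : R :=
  ln i%:R - ln (n%:R - i%:R + 1).

Definition logit_error {R : realType} (n i : nat) : R :=
  i%:R^-1 - (n%:R - i%:R + 1)^-1.

Section harmonic_approximation.
Context {R : realType}.

Lemma ln_succ_bounds (m : R) : 0 < m ->
  0 <= m^-1 - (ln (m + 1) - ln m) <= m^-1 - (m + 1)^-1.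
Proof.
move=> m0; have m10 : 0 < m + 1 by lra.
have up : ln ((m + 1) / m) <= m^-1.
  have -> : (m + 1) / m = 1 + m^-1 by field; lra.
  by apply: le_ln1Dx; have := invr_gt0 m; rewrite m0; lra.
have down : ln (m / (m + 1)) <= - (m + 1)^-1.
  have -> : m / (m + 1) = 1 - (m + 1)^-1 by field; lra.
  by apply: le_ln1Dx; rewrite ltrN2 invf_lt1//; lra.
move: up down; rewrite !ln_div ?posrE//; lra.
Qed.

Lemma gap_rateE (n i : nat) : (0 < n)%N ->
  gap_rate n i = i%:R * (n%:R - i%:R) / n%:R :> R.
Proof.
by move=> n0; rewrite /gap_rate /sigma_le; field; rewrite pnatr_eq0 -lt0n.
Qed.

Lemma gap_rate_gt0 (n i : nat) : (0 < i < n)%N -> 0 < gap_rate n i :> R.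
Proof.
move=> /andP[i0 iN]; rewrite gap_rateE ?(ltn_trans i0)//.
by rewrite divr_gt0 ?mulr_gt0 ?ltr0n ?subr_gt0 ?ltr_nat// (ltn_trans i0).
Qed.

Lemma invr_gap_rate (n i : nat) : (0 < i < n)%N ->
  (gap_rate n i)^-1 = mean_gap n i :> R.
Proof.
move=> /andP[i0 iN]; rewrite gap_rateE ?(ltn_trans i0)// /mean_gap.
have ni : n%:R - i%:R != 0 :> R by rewrite subr_eq0 eqr_nat gtn_eqF.
by field; rewrite ni !pnatr_eq0 -!lt0n i0 (ltn_trans i0).
Qed.

Lemma mean_gap_telescope (n i : nat) : (0 < i < n)%N ->
  0 <= (mean_gap n i : R) - (logit_approx n i.+1 - logit_approx n i)
    <= logit_error n i - logit_error n i.+1.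
Proof.
move=> /andP[i0 iN].
have iR : 0 < i%:R :> R by rewrite ltr0n.
have niR : 0 < n%:R - i%:R :> R by rewrite subr_gt0 ltr_nat.
have /andP[lo1 hi1] := ln_succ_bounds _ iR.
have /andP[lo2 hi2] := ln_succ_bounds _ niR.
rewrite /mean_gap /logit_approx /logit_error -natr1.
have -> : n%:R - (i%:R + 1) + 1 = n%:R - i%:R :> R by ring.
lra.
Qed.

End harmonic_approximation.

Section index_limits.
Context {R : realType}.

Lemma invn_cvg0 : (fun n : nat => n%:R^-1 : R) @ \oo --> 0.
Proof. by rewrite -cvg_shiftS; exact: cvg_harmonic. Qed.

Lemma ceil_ratio_cvg (c : R) : 0 <= c ->
  (fun n : nat => (`|Num.ceil (c * n%:R)|%N)%:R / n%:R : R) @ \oo --> c.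
Proof.
move=> c0.
apply: (@squeeze_cvgr _ _ _ _ (cst c) (fun n => c + n%:R^-1)); last 2 first.
- exact: cvg_cst.
- by rewrite -[X in _ --> X]addr0; apply: cvgD; [exact: cvg_cst|exact: invn_cvg0].
near=> n.
have n0 : 0 < n%:R :> R by rewrite ltr0n; near: n; exact: nbhs_infty_gt.
have cn0 : 0 <= Num.ceil (c * n%:R).
  by rewrite ceil_ge0 (lt_le_trans (ltrN10 R)) ?mulr_ge0// ltW.
rewrite natr_absz ger0_norm// /= ler_pdivlMr// ler_pdivrMr// mulrDl mulVf ?gt_eqF//.
apply/andP; split; first exact: ceil_ge.
by have := ceilB1_lt (c * n%:R); rewrite intrB; lra.
Unshelve. all: by end_near.
Qed.

Context {m : nat -> nat} {c : R}.
Hypotheses (c01 : 0 < c < 1) (mc : (fun n => (m n)%:R / n%:R : R) @ \oo --> c).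

Lemma index_inside : \forall n \near \oo, (0 < m n < n)%N.
Proof.
have /andP[c0 c1] := c01.
near=> n.
have n0 : (0 < n)%N by near: n; exact: nbhs_infty_gt.
have gt0 : 0 < (m n)%:R / n%:R :> R by near: n; exact: cvgr_gt mc _ c0.
have lt1 : (m n)%:R / n%:R < 1 :> R by near: n; exact: cvgr_lt mc _ c1.
rewrite -(ltr0n R) -(ltr_nat R).
move: gt0 lt1; rewrite pmulr_lgt0 ?invr_gt0 ?ltr0n// ltr_pdivrMr ?ltr0n// mul1r.
by move=> -> ->.
Unshelve. all: by end_near.
Qed.

Let index_inside_pos : \forall n \near \oo,
  [/\ 0 < n%:R :> R, 0 < (m n)%:R :> R & 0 < n%:R - (m n)%:R + 1 :> R].
Proof.
near=> n.
have /andP[m0 mn] : (0 < m n < n)%N by near: n; exact: index_inside.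
have : (m n)%:R < n%:R :> R by rewrite ltr_nat.
by rewrite !ltr0n m0 (ltn_trans m0)//; split => //; lra.
Unshelve. all: by end_near.
Qed.

Let compl_ratio_cvg :
  (fun n => (n%:R - (m n)%:R + 1) / n%:R : R) @ \oo --> 1 - c.
Proof.
rewrite -[1 - c]addr0.
apply: cvg_trans (_ : (fun n => 1 - (m n)%:R / n%:R + n%:R^-1) @ \oo --> _); last first.
  by apply: cvgD; [apply: cvgB => //; exact: cvg_cst|exact: invn_cvg0].
apply: near_eq_cvg; near=> n.
have n0 : n%:R != 0 :> R by rewrite pnatr_eq0 -lt0n; near: n; exact: nbhs_infty_gt.
by field.
Unshelve. all: by end_near.
Qed.

Lemma logit_approx_cvg :
  (fun n => logit_approx n (m n) : R) @ \oo --> ln c - ln (1 - c).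
Proof.
have /andP[c0 c1] := c01.
apply: cvg_trans (_ : (fun n => ln ((m n)%:R / n%:R) - ln ((n%:R - (m n)%:R + 1) / n%:R))
    @ \oo --> _); last first.
  apply: cvgB; first exact: (continuous_cvg _ (continuous_ln c0) mc).
  by apply: (continuous_cvg _ (continuous_ln _) compl_ratio_cvg); rewrite subr_gt0.
apply: near_eq_cvg; near=> n.
have [n0 m0 nm0] : [/\ 0 < n%:R :> R, 0 < (m n)%:R :> R & 0 < n%:R - (m n)%:R + 1 :> R].
  by near: n; exact: index_inside_pos.
by rewrite /logit_approx !ln_div ?posrE// opprB addrA subrK.
Unshelve. all: by end_near.
Qed.

Lemma logit_error_cvg0 :
  (fun n => logit_error n (m n) : R) @ \oo --> 0.
Proof.
have /andP[c0 c1] := c01.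
apply: cvg_trans (_ : (fun n => n%:R^-1 *
    (((m n)%:R / n%:R)^-1 - ((n%:R - (m n)%:R + 1) / n%:R)^-1)) @ \oo --> _); last first.
  rewrite -(mul0r (c^-1 - (1 - c)^-1)).
  apply: cvgM; first exact: invn_cvg0.
  apply: cvgB; first by apply: cvgV => //; rewrite gt_eqF.
  by apply: cvgV compl_ratio_cvg; rewrite subr_eq0 eq_sym lt_eqF.
apply: near_eq_cvg; near=> n.
have [n0 m0 nm0] : [/\ 0 < n%:R :> R, 0 < (m n)%:R :> R & 0 < n%:R - (m n)%:R + 1 :> R].
  by near: n; exact: index_inside_pos.
by rewrite /logit_error; field; rewrite !gt_eqF.
Unshelve. all: by end_near.
Qed.

End index_limits.

Section signed_sum_mean_gap_limit.
Context {R : realType} {k j : nat -> nat} {a b : R}.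
Hypotheses (a01 : 0 < a < 1) (b01 : 0 < b < 1).
Hypotheses (ka : (fun n => (k n)%:R / n%:R : R) @ \oo --> a)
  (jb : (fun n => (j n)%:R / n%:R : R) @ \oo --> b).

Lemma signed_sum_mean_gap_cvg :
  (fun n => signed_sum (mean_gap n) (k n) (j n) : R) @ \oo -->
    (ln b - ln (1 - b)) - (ln a - ln (1 - a)).
Proof.
set L := fun n => logit_approx n (j n) - logit_approx n (k n) : R.
set E := fun n => `|logit_error n (k n) - logit_error n (j n) : R|.
have Lc : L @ \oo --> (ln b - ln (1 - b)) - (ln a - ln (1 - a)).
  by apply: cvgB; apply: logit_approx_cvg.
have Ec : E @ \oo --> 0.
  apply/norm_cvg0P; rewrite -(subr0 0).
  by apply: cvgB; [exact: logit_error_cvg0 a01 ka|exact: logit_error_cvg0 b01 jb].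
apply: (@squeeze_cvgr _ _ _ _ (L \- E) (L \+ E)); last 2 first.
- by rewrite -[X in _ --> X]subr0; exact: cvgB.
- by rewrite -[X in _ --> X]addr0; exact: cvgD.
near=> n.
have /andP[k0 kn] : (0 < k n < n)%N by near: n; exact: index_inside a01 ka.
have /andP[j0 jn] : (0 < j n < n)%N by near: n; exact: index_inside b01 jb.
rewrite /L /E /= -ler_distlC distrC.
apply: signed_sum_telescope_bound => i /andP[ki ik].
by apply: mean_gap_telescope; lia.
Unshelve. all: by end_near.
Qed.

End signed_sum_mean_gap_limit.

Section exponential_tail.
Context {R : realType}.
Variable l : R.
Hypothesis l_gt0 : 0 < l.
Local Open Scope ereal_scope.

Lemma integral_exponential_pdf_itvcy (r : R) : (0 <= r)%R ->
  \int[lebesgue_measure]_(x in `[r, +oo[) (exponential_pdf l x)%:E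
  = (expR (- l * r))%:E.
Proof.
move=> r0.
have cexpNM : continuous (fun z : R^o => expR (- l * z)).
  move=> z; apply: continuous_comp; last exact: continuous_expR.
  by apply: continuousM => //; apply: (@continuousN _ R^o); exact: cst_continuous.
rewrite (@ge0_continuous_FTC2y _ _ (fun x => - expR (- l * x))%R r 0%R)//.
- by rewrite sub0e EFinN oppeK.
- by move=> x _; apply: exponential_pdf_ge0; exact: ltW.
- apply: (@continuous_subspaceW R^o _ _ [set` `[0, +oo[%R]).
    by apply: subset_itvr; rewrite bnd_simp.
  exact: within_continuous_exponential_pdf.
- rewrite -oppr0; apply: cvgN.
  rewrite (_ : (fun x => expR (- l * x))%R =
               (fun z => expR (- z))%R \o (fun z => l * z)%R); last first.
    by apply: eq_fun => x; rewrite mulNr.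
  apply: (@cvg_comp _ _ _ _ _ _ (pinfty_nbhs R)); last exact: cvgr_expR.
  exact: gt0_cvgMry.
- by apply: cvgN; apply/cvg_at_right_filter; exact: cexpNM.
- move=> z; rewrite in_itv/= andbT => rz.
  by apply: derive1_exponential_pdf; rewrite in_itv/= andbT (le_lt_trans r0 rz).
Qed.

Lemma exponential_prob_itvoy (r : R) : (0 <= r)%R ->
  exponential_prob l `]r, +oo[%classic = (expR (- l * r))%:E.
Proof.
move=> r0; rewrite /exponential_prob integral_itv_obnd_cbnd.
  exact: integral_exponential_pdf_itvcy.
apply/measurable_realfun.measurable_EFinP; apply: measurable_funTS.
exact: measurable_exponential_pdf.
Qed.

Lemma exponential_prob_itvNyo (r : R) : (r <= 0)%R ->
  exponential_prob l `]-oo, r[%classic = 0.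
Proof.
move=> r0; rewrite /exponential_prob integral0_eq// => x.
by rewrite /= in_itv/= => xr; rewrite lt0_exponential_pdf// (lt_le_trans xr).
Qed.

End exponential_tail.

Lemma ge0_expectation_Lfun1 d (T : measurableType d) (R : realType)
    (P : probability T R) (X : {RV P >-> R}) :
  (forall w, 0 <= X w) -> ('E_P[X] \is a fin_num)%E -> (X : T -> R) \in Lfun P 1.
Proof.
move=> X0 Xfin; apply/Lfun1_integrable/integrableP; split.
  exact/measurable_realfun.measurable_EFinP.
under eq_integral do rewrite /= ger0_norm ?X0//.
by rewrite -expectation_def ltey_eq Xfin.
Qed.

Section exponential_expectation.
Context {d} {T : measurableType d} {R : realType} {P : probability T R}.
Context {l : R} {X : {RV P >-> R}}.
Hypotheses (l_gt0 : (0 < l)%R)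
  (X_exp : forall A, measurable A -> distribution P X A = exponential_prob l A).
Local Open Scope ereal_scope.

Let Xpos : {RV P >-> R} := measurable_realfun.max_mfun X (cst 0%R).
Let Xneg : {RV P >-> R} :=
  measurable_realfun.max_mfun (measurable_realfun.scale_mfun (-1)%R X) (cst 0%R).

Let XposE : (Xpos : T -> R) = X^\+%R. Proof. by []. Qed.
Let XnegE : (Xneg : T -> R) = X^\-%R.
Proof. by apply/funext => w /=; rewrite /funrneg /= mulrN1. Qed.

Let expectation_Xpos : 'E_P[Xpos] = (l^-1)%:E.
Proof.
rewrite ge0_expectation_ccdf; last by move=> w; rewrite XposE.
transitivity (\int[lebesgue_measure]_(r in `[0%R, +oo[)
                ((l^-1)%:E * (exponential_pdf l r)%:E)).
  apply: eq_integral => r; rewrite inE /= in_itv /= andbT => r0.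
  have -> : ccdf Xpos r = distribution P X `]r, +oo[.
    congr (P _); apply/seteqP; split => w /=; rewrite !in_itv/= !andbT.
      by rewrite lt_max (ltNge r 0%R) r0 orbF.
    by move=> h; rewrite lt_max h.
  rewrite X_exp// exponential_prob_itvoy// exponential_pdfE//.
  by rewrite -EFinM mulrA mulVf ?gt_eqF// mul1r.
rewrite ge0_integralZl//=; last 3 first.
- apply/measurable_realfun.measurable_EFinP; apply: measurable_funTS.
  exact: measurable_exponential_pdf.
- by move=> x _; rewrite lee_fin exponential_pdf_ge0// ltW.
- by rewrite lee_fin invr_ge0 ltW.
by rewrite integral_exponential_pdf_itvcy// mulr0 expR0 mule1.
Qed.

Let expectation_Xneg : 'E_P[Xneg] = 0.
Proof.
rewrite ge0_expectation_ccdf; last by move=> w; rewrite XnegE.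
apply: integral0_eq => r; rewrite /= in_itv /= andbT => r0.
have -> : ccdf Xneg r = distribution P X `]-oo, (- r)%R[.
  congr (P _); apply/seteqP; split => w /=; rewrite !in_itv/= ?andbT mulrN1.
    by rewrite lt_max (ltNge r 0%R) r0 orbF ltrNr.
  by move=> h; rewrite lt_max ltrNr h.
by rewrite X_exp// exponential_prob_itvNyo// oppr_le0.
Qed.

Let Xpos_Lfun1 : (Xpos : T -> R) \in Lfun P 1.
Proof. by apply: ge0_expectation_Lfun1 => [w|]; rewrite ?expectation_Xpos ?XposE. Qed.

Let Xneg_Lfun1 : (Xneg : T -> R) \in Lfun P 1.
Proof. by apply: ge0_expectation_Lfun1 => [w|]; rewrite ?expectation_Xneg ?XnegE. Qed.

Lemma exponential_Lfun1 : (X : T -> R) \in Lfun P 1.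
Proof. by rewrite -(funrposBneg X) -XposE -XnegE rpredB. Qed.

Lemma expectation_exponential : 'E_P[X] = (l^-1)%:E.
Proof.
rewrite -(funrposBneg X) -XposE -XnegE expectationB//.
by rewrite expectation_Xpos expectation_Xneg sube0.
Qed.

End exponential_expectation.

Section signed_sum_expectation.
Context d (T : measurableType d) (R : realType) (P : probability T R).
Variables (X : nat -> {RV P >-> R}) (mu : nat -> R).
Local Open Scope ereal_scope.

Let sum_nat_seqE (a b : nat) : (fun w => \sum_(a <= i < b) X i w)%R =
  (\sum_(Y <- [seq (X i : T -> R) | i <- index_iota a b]) Y)%R.
Proof. by rewrite sumrfctE; apply/funext => w; rewrite big_map. Qed.

Lemma sum_nat_Lfun1 (a b : nat) :
  (forall i, (a <= i < b)%N -> (X i : T -> R) \in Lfun P 1) ->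
  (fun w => \sum_(a <= i < b) X i w)%R \in Lfun P 1.
Proof.
move=> XL; rewrite sum_nat_seqE big_seq; apply: rpred_sum => Y /mapP[i].
by rewrite mem_index_iota => /XL + ->.
Qed.

Lemma expectation_sum_nat (a b : nat) :
  (forall i, (a <= i < b)%N -> (X i : T -> R) \in Lfun P 1) ->
  (forall i, (a <= i < b)%N -> 'E_P[X i] = (mu i)%:E) ->
  'E_P[fun w => (\sum_(a <= i < b) X i w)%R] = (\sum_(a <= i < b) mu i)%:E.
Proof.
move=> XL XE; rewrite sum_nat_seqE expectation_sum; last first.
  by move=> Y /mapP[i]; rewrite mem_index_iota => /XL + ->.
by rewrite big_map -sumEFin; apply: eq_big_nat => i /XE.
Qed.

Lemma expectation_signed_sum (a b : nat) :
  (forall i, (minn a b <= i < maxn a b)%N -> (X i : T -> R) \in Lfun P 1) ->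
  (forall i, (minn a b <= i < maxn a b)%N -> 'E_P[X i] = (mu i)%:E) ->
  'E_P[fun w => signed_sum (X^~ w) a b] = (signed_sum mu a b)%:E.
Proof.
rewrite /signed_sum; case: leqP => ab XL XE; first exact: expectation_sum_nat.
have -> : (fun w => - \sum_(b <= i < a) X i w)%R =
    (-1)%R \o* (fun w => \sum_(b <= i < a) X i w)%R.
  by apply/funext => w /=; rewrite mulrN1.
by rewrite expectationZl ?sum_nat_Lfun1// expectation_sum_nat// -EFinM mulN1r.
Qed.

End signed_sum_expectation.

Theorem corollary13 (R : realType) (dsp : measure_display)
  (T : nat -> measurableType dsp) (P : forall n, probability (T n) R)
  (D : forall n, nat -> {RV (P n) >-> R}) :
  (forall n i, (1 <= i)%N -> (i <= n.-1)%N ->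
     forall A : set R, measurable A ->
     distribution (P n) (D n i) A = exponential_prob (gap_rate n i) A) ->
  (forall n, mutually_independent (P n) [set i | (1 <= i)%N /\ (i <= n.-1)%N]
                                  (D n)) ->
  forall x : R, 0 < x < 1 ->
  (fun n : nat =>
     ('E_(P n)[tdiff (fun i w => D n i w)
                    `|Num.ceil (n%:R / 2 : R)|%N `|Num.ceil (x * n%:R)|%N])%E)
    @ \oo --> (ln (x / (1 - x)))%:E.
Proof.
move=> X_exp _ x x01; have /andP[x0 x1] := x01.
have gap_mean n i : (0 < i < n)%N ->
    (D n i : T n -> R) \in Lfun (P n) 1 /\ ('E_(P n)[D n i] = (mean_gap n i)%:E)%E.
  move=> iin; have ri := @gap_rate_gt0 R n i iin.
  have [i0 iN] : (0 < i)%N /\ (i <= n.-1)%N by lia.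
  split; first exact: exponential_Lfun1 ri (X_exp n i i0 iN).
  by rewrite (expectation_exponential ri (X_exp n i i0 iN)) invr_gap_rate.
have half01 : 0 < (2^-1 : R) < 1 by rewrite invr_gt0 ltr0n invf_lt1 ?ltr1n.
have kc : (fun n => (`|Num.ceil (n%:R / 2 : R)|%N)%:R / n%:R : R) @ \oo --> (2^-1 : R).
  by under eq_fun do rewrite [_ / 2]mulrC; exact: ceil_ratio_cvg.
have jc : (fun n => (`|Num.ceil (x * n%:R)|%N)%:R / n%:R : R) @ \oo --> x.
  exact: ceil_ratio_cvg (ltW x0).
have mean : \forall n \near \oo,
    ('E_(P n)[tdiff (fun i w => D n i w)
        `|Num.ceil (n%:R / 2 : R)|%N `|Num.ceil (x * n%:R)|%N] =
     (signed_sum (mean_gap n)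
        `|Num.ceil (n%:R / 2 : R)|%N `|Num.ceil (x * n%:R)|%N)%:E)%E.
  near=> n.
  have /andP[k0 kn] : (0 < `|Num.ceil (n%:R / 2 : R)|%N < n)%N.
    by near: n; exact: index_inside half01 kc.
  have /andP[j0 jn] : (0 < `|Num.ceil (x * n%:R)|%N < n)%N.
    by near: n; exact: index_inside x01 jc.
  apply: expectation_signed_sum => i /andP[ki ik];
    by have /gap_mean[] : (0 < i < n)%N by lia.
apply: cvg_EFin; first by near=> n; rewrite (near mean n).
have -> : ln (x / (1 - x)) = (ln x - ln (1 - x)) - (ln 2^-1 - ln (1 - 2^-1)).
  have -> : 1 - 2^-1 = 2^-1 :> R by field.
  by rewrite subrr subr0 ln_div ?posrE ?subr_gt0.
apply: cvg_trans (signed_sum_mean_gap_cvg half01 x01 kc jc).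
by apply: near_eq_cvg; near=> n; rewrite /= (near mean n).
Unshelve. all: by end_near.
Qed.
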